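(* Let $P$ be a matrix as in the context, with column index set $\mathcal{F}$. Let $A\subseteq\mathcal{F}$ with $|A|=r+1$, $\det(P_A)\neq0$ and $A\cap\mathcal{F}'\neq\emptyset$. Then there exists $i_1\in\{0,\dots,r\}$ such that $|A\cap\mathcal{F}_{i_1}|=0$ and $|A\cap\mathcal{F}_i|=1$ for all $i\neq i_1$, and $|\det(P_A)|=\prod_{i\neq i_1}l_{ij_i}$, where $A\cap\mathcal{F}_i=\{f_{ij_i}\}$ for $i\ne i_1$.
   Context: Fix integers $r\ge1$, $n_0,\dots,n_r\ge1$, vectors $l_i\in\mathbb{Z}_{\ge1}^{n_i}$, $d_i\in\mathbb{Z}^{n_i}$ with $\gcd(l_{ij},d_{ij})=1$ and $d_{i1}/l_{i1}>\dots>d_{in_i}/l_{in_i}$. Let $e_1,\dots,e_{r+1}$ be the standard basis of $\mathbb{Z}^{r+1}$, $u=e_{r+1}$, $e_0=-(e_1+\dots+e_r)$, $v_{ij}=l_{ij}e_i+d_{ij}u$. Let $\mathcal{F}_i=\{f_{i1},\dots,f_{in_i}\}$, $\mathcal{F}'$ one of $\emptyset,\{f^+\},\{f^-\},\{f^+,f^-\}$ (types (ee),(pe),(ep),(pp)), $\mathcal{F}=\mathcal{F}_0\cup\dots\cup\mathcal{F}_r\cup\mathcal{F}'$, and $P$ the $(r+1)\times|\mathcal{F}|$ matrix with column $v_{ij}$ at $f_{ij}$, $u$ at $f^+$, $-u$ at $f^-$. For $|A|=r+1$, $P_A$ is the square submatrix of columns indexed by $A$. *)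

From HB Require Import structures.
From mathcomp Require Import all_boot all_order all_algebra.
Set Implicit Arguments. Unset Strict Implicit. Unset Printing Implicit Defensive.
Import Order.TTheory GRing.Theory Num.Theory.
Local Open Scope ring_scope.

(* Column labels: inl (Tagged i j) = f_{ij}  (j : 'I_(n i), 0-based: j stands for f_{i,j+1});
   inr true = f^+, inr false = f^-.
   Coordinates of Z^{r+1}: coordinate k (0-based) is e_{k+1}; so e_i (1<=i<=r) is
   coordinate i-1 and u = e_{r+1} is coordinate r. *)

Definition colT (r : nat) (n : 'I_r.+1 -> nat) : finType :=
  ({i : 'I_r.+1 & 'I_(n i)} + bool)%type.

Definition fij (r : nat) (n : 'I_r.+1 -> nat) (i : 'I_r.+1) (j : 'I_(n i))
  : colT n := inl (Tagged (fun i => 'I_(n i)) j).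

(* the full column index set F = F_0 u ... u F_r u F', where F' is encoded by a
   subset Fp of bool (true = f^+, false = f^-); the four types (ee),(pe),(ep),(pp)
   correspond to the four subsets of bool *)
Definition Fset (r : nat) (n : 'I_r.+1 -> nat) (Fp : {set bool}) : {set colT n} :=
  [set x : colT n | if x is inr b then b \in Fp else true].

Definition Fi (r : nat) (n : 'I_r.+1 -> nat) (i : 'I_r.+1) : {set colT n} :=
  [set x : colT n | if x is inl s then tag s == i else false].

Definition Pent (r : nat) (n : 'I_r.+1 -> nat)
  (l d : forall i : 'I_r.+1, 'I_(n i) -> int) (k : 'I_r.+1) (x : colT n) : int :=
  match x with
  | inl s =>
      let i := tag s in let j := tagged s in
      if (k == r :> nat) then d i j
      else if (i == 0 :> nat) then - l i j
      else if (k.+1 == i :> nat) then l i j else 0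
  | inr true => if (k == r :> nat) then 1 else 0
  | inr false => if (k == r :> nat) then -1 else 0
  end.

(* P_A : the square submatrix of the columns indexed by A (in the enumeration
   order of A; meaningful when #|A| = r+1) *)
Definition PA (r : nat) (n : 'I_r.+1 -> nat)
  (l d : forall i : 'I_r.+1, 'I_(n i) -> int) (A : {set colT n}) : 'M[int]_(r.+1) :=
  \matrix_(k < r.+1, c < r.+1) Pent l d k (nth (inr true) (enum A) c).

(* Expanding det P_A along a column +-u of A leaves, up to sign, the minor on
   the rows e_1, ..., e_r, whose columns are l_ij e_i (with e_0 = -(e_1 + ... + e_r)).
   If it does not vanish, every other column of A is some f_ij and their blocks i
   are pairwise distinct, so exactly one block i_1 is missed.  Any r of the vectors
   e_0, ..., e_r form a unimodular basis of Z^r, hence |det P_A| = prod l_ij. *)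

From HB Require Import structures.
From mathcomp Require Import all_boot all_order all_algebra fingroup perm.

Set Implicit Arguments. Unset Strict Implicit. Unset Printing Implicit Defensive.
Import Order.TTheory GRing.Theory Num.Theory.
Local Open Scope ring_scope.

Lemma expand_det_row_single (R : comRingType) m (A : 'M[R]_m) i0 j0 :
  (forall j, j != j0 -> A i0 j = 0) -> \det A = A i0 j0 * cofactor A i0 j0.
Proof.
move=> A0; rewrite (expand_det_row _ i0) (bigD1 j0) //= big1 ?addr0 // => j /A0->.
by rewrite mul0r.
Qed.

Lemma expand_det_col_single (R : comRingType) m (A : 'M[R]_m) i0 j0 :
  (forall i, i != i0 -> A i j0 = 0) -> \det A = A i0 j0 * cofactor A i0 j0.
Proof.
move=> A0; rewrite -det_tr (expand_det_row_single (i0 := j0) (j0 := i0)).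
  by rewrite cofactor_tr mxE.
by move=> i /A0; rewrite mxE.
Qed.

Lemma det_col_perm (R : comRingType) m (s : 'S_m) (A : 'M[R]_m) :
  \det (col_perm s A) = (-1) ^+ s * \det A.
Proof. by rewrite col_permE det_mulmx det_perm odd_permV mulrC. Qed.

Lemma det_colsub_neq0_inj (R : idomainType) m p (M : 'M[R]_(m, p)) (t : 'I_m -> 'I_p) :
  \det (colsub t M) != 0 -> injective t.
Proof.
move=> detM c c' tE; apply/eqP; apply: contraNT detM => c'c.
by rewrite -det_tr (determinant_alternate c'c) // => k; rewrite !mxE tE.
Qed.

Lemma injective_lift_perm m (t : 'I_m -> 'I_m.+1) i1 :
  injective t -> (forall c, t c != i1) -> exists s : 'S_m, t =1 lift i1 \o s.
Proof.
move=> t_inj t_i1.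
have tE c : t c = lift i1 (odflt c (unlift i1 (t c))).
  by have /unlift_some[k -> ->] : i1 != t c by rewrite eq_sym t_i1.
have s_inj : injective (fun c => odflt c (unlift i1 (t c))).
  by move=> c c' /(congr1 (lift i1)); rewrite -!tE => /t_inj.
by exists (perm s_inj) => c; rewrite /= permE -tE.
Qed.

(* Column i is e_i in the coordinates e_1, ..., e_m, with e_0 = -(e_1 + ... + e_m). *)
Definition simplex_mx m : 'M[int]_(m, m.+1) :=
  \matrix_(k, i) if i == ord0 then -1 else (i == lift ord0 k)%:R.

Lemma normr_det_col'_simplex_mx m (i1 : 'I_m.+1) : `|\det (col' i1 (simplex_mx m))| = 1.
Proof.
case: m i1 => [|m] i1; first by rewrite det_mx00 normr1.
case: (unliftP ord0 i1) => [p ->|->]; last first.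
  have -> : col' ord0 (simplex_mx m.+1) = 1%:M.
    apply/matrixP => k c; rewrite !mxE eq_sym (negbTE (neq_lift _ _)).
    by rewrite (inj_eq lift_inj) eq_sym.
  by rewrite det1 normr1.
have row_p c : col' (lift ord0 p) (simplex_mx m.+1) p c = - (c == ord0)%:R.
  rewrite !mxE [lift _ c == lift _ _]eq_sym (negbTE (neq_lift _ _)).
  have -> : (lift (lift ord0 p) c == ord0) = (c == ord0).
    by rewrite -!val_eqE /= /bump; case: (nat_of_ord c) => [|c']; rewrite ?addnS.
  by case: eqP; rewrite ?oppr0.
(* Row p meets only the column e_0; deleting both leaves the identity. *)
rewrite (expand_det_row_single (i0 := p) (j0 := ord0)); last first.
  by move=> c /negbTE; rewrite row_p => ->; rewrite oppr0.
rewrite /cofactor; have -> : row' p (col' ord0 (col' (lift ord0 p) (simplex_mx m.+1))) = 1%:M.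
  apply/matrixP => k c; rewrite !mxE.
  have -> : lift (lift ord0 p) (lift ord0 c) = lift ord0 (lift p c).
    by apply: val_inj; rewrite /= /bump !add1n ltnS addnS.
  by rewrite eq_sym (negbTE (neq_lift _ _)) !(inj_eq lift_inj) eq_sym.
by rewrite row_p eqxx det1 mulr1 normrM normr_sign mulr1 normrN normr1.
Qed.

Lemma normr_det_colsub_simplex_mx m (t : 'I_m -> 'I_m.+1) i1 :
  injective t -> (forall c, t c != i1) -> `|\det (colsub t (simplex_mx m))| = 1.
Proof.
move=> /injective_lift_perm/[apply] -[s tE].
have -> : colsub t (simplex_mx m) = col_perm s (col' i1 (simplex_mx m)).
  by apply/matrixP => k c; rewrite !mxE tE.
by rewrite det_col_perm normrM normr_sign normr_det_col'_simplex_mx mul1r.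
Qed.

Lemma injective_ord_missing m (t : 'I_m -> 'I_m.+1) :
  injective t -> exists i1, forall c, t c != i1.
Proof.
move=> t_inj; have /subsetPn[i1 _ t_i1] : ~~ ([set: 'I_m.+1] \subset codom t).
  by apply/negP => /subset_leq_card; rewrite cardsT card_codom // !card_ord ltnn.
by exists i1 => c; apply: contraNneq t_i1 => <-; apply: codom_f.
Qed.

Lemma injective_missing_onto m (t : 'I_m -> 'I_m.+1) i1 :
  injective t -> (forall c, t c != i1) -> forall i, i != i1 -> exists c, t c = i.
Proof.
move=> /injective_lift_perm/[apply] -[s tE] i; rewrite eq_sym => /unlift_some[k -> _].
by exists (s^-1 k)%g; rewrite tE /= permKV.
Qed.

Lemma big_neq_injective (R : Type) (idx : R) (op : Monoid.com_law idx) m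
    (t : 'I_m -> 'I_m.+1) i1 (F : 'I_m.+1 -> R) :
  injective t -> (forall c, t c != i1) ->
  \big[op/idx]_(i | i != i1) F i = \big[op/idx]_c F (t c).
Proof.
move=> /injective_lift_perm/[apply] -[s tE].
rewrite big_mkcond (bigD1_ord i1) //= eqxx Monoid.mul1m (reindex_inj (@perm_inj _ s)).
by apply: eq_bigr => k _; rewrite tE eq_sym neq_lift.
Qed.

Section ColumnsOfP.

Variables (r : nat) (n : 'I_r.+1 -> nat).

Definition lcoef (l : forall i : 'I_r.+1, 'I_(n i) -> int) (x : colT n) : int :=
  if x is inl s then l (tag s) (tagged s) else 0.

Definition blk (x : colT n) : 'I_r.+1 := if x is inl s then tag s else ord0.

Lemma Pent_lift_max (l d : forall i : 'I_r.+1, 'I_(n i) -> int) k x :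
  Pent l d (lift ord_max k) x = lcoef l x * simplex_mx r k (blk x).
Proof.
have kr : (k == r :> nat) = false by rewrite ltn_eqF.
case: x => [[i j]|[]]; rewrite /Pent lift_max kr ?mul0r // mxE /=.
rewrite -!val_eqE /= /bump add1n [(k.+1 == _)]eq_sym.
by case: (_ == 0)%N; case: (_ == k.+1)%N; rewrite ?mulrN1 ?mulr1 ?mulr0.
Qed.

Lemma lcoef_neq0_Fi l x : lcoef l x != 0 -> x \in Fi n (blk x).
Proof. by case: x => [s|b] //= _; rewrite inE. Qed.

Lemma Fi_blk x i : x \in Fi n i -> blk x = i.
Proof. by case: x => [s|b]; rewrite inE // => /eqP. Qed.

Lemma Fi_fij x i : x \in Fi n i -> exists j : 'I_(n i), x = fij j.
Proof. by case: x => [[i' j]|b]; rewrite inE //= => /eqP ii'; subst i'; exists j. Qed.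

Lemma inr_notin_Fi b i : (inr b : colT n) \notin Fi n i.
Proof. by rewrite inE. Qed.

Section ColumnsOfA.

Variable A : {set colT n}.
Hypothesis cardA : #|A| = r.+1.

Definition colA (c : 'I_r.+1) : colT n := nth (inr true) (enum A) c.

Lemma colA_in c : colA c \in A.
Proof. by rewrite -mem_enum mem_nth // -cardE cardA. Qed.

Lemma colA_onto a : a \in A -> exists c, a = colA c.
Proof.
move=> aA; have ia : (index a (enum A) < r.+1)%N by rewrite -cardA cardE index_mem mem_enum.
by exists (Ordinal ia); rewrite /colA nth_index ?mem_enum.
Qed.

Lemma colA_lift_onto c0 b a : colA c0 = inr b -> a \in A -> a != inr b ->
  exists c, a = colA (lift c0 c).
Proof.
move=> c0E /colA_onto[c ->]; case: (unliftP c0 c) => [c' ->|->]; first by exists c'.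
by rewrite c0E eqxx.
Qed.

End ColumnsOfA.

Lemma normr_det_PA_inr l d A c0 b : colA A c0 = inr b ->
  `|\det (PA l d A)| =
    `|\det (colsub (fun c => blk (colA A (lift c0 c))) (simplex_mx r))| *
    \prod_c `|lcoef l (colA A (lift c0 c))|.
Proof.
move=> c0E.
have PA_c0 k : PA l d A k c0 = if k == ord_max then (-1) ^+ ~~ b else 0.
  by rewrite mxE -/(colA A c0) c0E /Pent -val_eqE; case: (b).
rewrite (expand_det_col_single (i0 := ord_max) (j0 := c0)); last first.
  by move=> k /negbTE; rewrite PA_c0 => ->.
rewrite /cofactor; have -> : row' ord_max (col' c0 (PA l d A)) =
    colsub (fun c => blk (colA A (lift c0 c))) (simplex_mx r) *m
    diag_mx (\row_c lcoef l (colA A (lift c0 c))).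
  by apply/matrixP => k c; rewrite mul_mx_diag !mxE -/(colA A _) Pent_lift_max mxE mulrC.
rewrite det_mulmx det_diag !normrM !normr_sign PA_c0 eqxx normr_sign !mul1r normr_prod.
by under eq_bigr do rewrite mxE.
Qed.

Section Transversal.

Variables (A : {set colT n}) (m : nat) (y : 'I_m -> colT n) (t : 'I_m -> 'I_r.+1).
Hypotheses (yA : forall c, y c \in A) (yF : forall c, y c \in Fi n (t c)).
Hypothesis Ay : forall a i, a \in A :&: Fi n i -> exists c, a = y c.

Lemma setI_Fi_blk c i : y c \in A :&: Fi n i -> t c = i.
Proof. by rewrite inE => /andP[_ /Fi_blk <-]; rewrite (Fi_blk (yF c)). Qed.

Lemma setI_Fi_missed i : (forall c, t c != i) -> A :&: Fi n i = set0.
Proof.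
move=> t_i; apply/setP => a; rewrite in_set0; apply/negP => /[dup]/Ay[c ->].
by move/setI_Fi_blk/eqP; apply/negP.
Qed.

Lemma setI_Fi_hit : injective t -> forall c, A :&: Fi n (t c) = [set y c].
Proof.
move=> t_inj c; apply/setP => a; rewrite in_set1.
apply/idP/eqP => [/[dup]/Ay[c' ->] /setI_Fi_blk/t_inj->//|->].
by rewrite inE yA yF.
Qed.

End Transversal.

Lemma setI_Fi_pick A i (j0 : 'I_(n i)) a :
  A :&: Fi n i = [set a] -> a = fij (odflt j0 [pick j | fij j \in A]).
Proof.
move=> AiE; have /setIP[aA /Fi_fij[j aE]] : a \in A :&: Fi n i by rewrite AiE set11.
case: pickP => [j' j'A|/(_ j)]; last by rewrite -aE aA.
by apply/esym/set1P; rewrite -AiE !inE j'A /=.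
Qed.

End ColumnsOfP.

Theorem lemma4p8 (r : nat) (n : 'I_r.+1 -> nat)
  (l d : forall i : 'I_r.+1, 'I_(n i) -> int) (Fp : {set bool})
  (hr : (1 <= r)%N)
  (hn : forall i, (0 < n i)%N)
  (hl : forall i j, 0 < l i j)
  (hcop : forall i j, gcdz (l i j) (d i j) = 1)
  (hslope : forall i (j j' : 'I_(n i)), (j < j')%N ->
     (d i j)%:~R / (l i j)%:~R > (d i j')%:~R / (l i j')%:~R :> rat)
  (A : {set colT n})
  (hAF : A \subset Fset n Fp)
  (hcard : #|A| = r.+1)
  (hdet : \det (PA l d A) != 0)
  (hAFp : [exists b : bool, inr b \in A]) :
  exists i1 : 'I_r.+1,
    #|A :&: Fi n i1| = 0%N /\
    exists j : forall i : 'I_r.+1, 'I_(n i),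
      (forall i, i != i1 -> #|A :&: Fi n i| = 1%N /\ A :&: Fi n i = [set fij (j i)]) /\
      `|\det (PA l d A)| = \prod_(i < r.+1 | i != i1) l i (j i).
Proof.
case/existsP: hAFp => b /(colA_onto hcard)[c0 c0E].
pose y c := colA A (lift c0 c); pose t c := blk (y c).
have detE := normr_det_PA_inr l d (esym c0E).
rewrite -normr_eq0 detE mulf_eq0 negb_or normr_eq0 in hdet.
case/andP: hdet => detW /prodf_neq0 ly.
have yF c : y c \in Fi n (t c) by apply: (lcoef_neq0_Fi (l := l)); rewrite -normr_eq0 ly.
have t_inj : injective t := det_colsub_neq0_inj detW.
have [i1 t_i1] := injective_ord_missing t_inj.
have Ay a i : a \in A :&: Fi n i -> exists c, a = y c.
  case/setIP=> aA aF; apply: (colA_lift_onto hcard (esym c0E) aA).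
  by apply: contraTneq aF => ->; rewrite inr_notin_Fi.
have yA c : y c \in A := colA_in hcard _.
exists i1; split; first by rewrite (setI_Fi_missed yF Ay t_i1) cards0.
pose j i := odflt (Ordinal (hn i)) [pick j | fij j \in A].
have jE c : fij (j (t c)) = y c := esym (setI_Fi_pick _ (setI_Fi_hit yA yF Ay t_inj c)).
exists j; split.
  move=> i /(injective_missing_onto t_inj t_i1)[c <-].
  by rewrite (setI_Fi_hit yA yF Ay t_inj) cards1 jE.
rewrite detE (normr_det_colsub_simplex_mx t_inj t_i1) mul1r (big_neq_injective _ _ t_inj t_i1).
by apply: eq_bigr => c _; rewrite -[colA A _]/(y c) -jE gtr0_norm ?hl.
Qed.
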